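(* Let $(X,d_X)$ be a finite metric space and let $\mathcal{C}(X)$ and $\mathcal{D}(X)$ be two partitions of $X$ such that every set in $\mathcal{C}(X)$ and every set in $\mathcal{D}(X)$ has diameter at most $\delta$. Fix one of the following inter-cluster distances $d_{\mathcal{C}}$ on pairs of nonempty subsets $A,B\subseteq X$: $\max(A,B)=\max_{x\in A,y\in B} d_X(x,y)$, $\ \min(A,B)=\min_{x\in A,y\in B} d_X(x,y)$, or $\ \operatorname{avg}(A,B)=\frac{1}{|A||B|}\sum_{x\in A}\sum_{y\in B} d_X(x,y)$. Let $G_{\mathcal{C}(X)}$ and $G_{\mathcal{D}(X)}$ be the ClusterGraphs of $\mathcal{C}(X)$ and $\mathcal{D}(X)$ with respect to $d_{\mathcal{C}}$. Then for every vertex $u$ of $G_{\mathcal{C}(X)}$ (corresponding to the cluster $C_u\in\mathcal{C}(X)$), the image $\operatorname{im}(u)$ of $u$ in $G_{\mathcal{D}(X)}$ spans a clique in $G_{\mathcal{D}(X)}$, and the diameter of this clique, i.e. $\max\{ d_{\mathcal{C}}(D_i,D_j) : D_i, D_j \in \operatorname{im}(u),\ D_i\neq D_j\}$, is at most $3\delta$ when $d_{\mathcal{C}}$ is the maximum or the average distance, and at most $\delta$ when $d_{\mathcal{C}}$ is the minimum distance.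
   Context: A partition of $X$ is a collection of pairwise disjoint subsets (clusters) whose union is $X$; the diameter of a subset $S$ is $\max_{x,y\in S}d_X(x,y)$. The ClusterGraph of a partition $\mathcal{P}(X)$ with respect to an inter-cluster distance $d_{\mathcal{C}}$ is the complete graph whose vertices are the clusters of $\mathcal{P}(X)$, with the edge between clusters $P_i,P_j$ weighted by $d_{\mathcal{C}}(P_i,P_j)$. The image of a vertex $u$ of $G_{\mathcal{C}(X)}$ (cluster $C_u$) in $G_{\mathcal{D}(X)}$ is the set of vertices of $G_{\mathcal{D}(X)}$ whose clusters $D_j\in\mathcal{D}(X)$ satisfy $D_j\cap C_u\neq\emptyset$. The diameter of a set of vertices in such a weighted graph is the greatest edge weight between any two of its vertices. *)

From mathcomp Require Import all_boot all_order all_algebra.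
Set Implicit Arguments. Unset Strict Implicit. Unset Printing Implicit Defensive.
Import Order.TTheory GRing.Theory Num.Theory.
Local Open Scope ring_scope.

Section Defs.
Variables (R : realFieldType) (T : finType).

Definition is_metric (d : T -> T -> R) : Prop :=
  [/\ forall x y, 0 <= d x y,
      forall x y, d x y = 0 <-> x = y,
      forall x y, d x y = d y x
    & forall x y z, d x z <= d x y + d y z].

Definition diam (d : T -> T -> R) (S : {set T}) : R :=
  \big[Num.max/0]_(x in S) \big[Num.max/0]_(y in S) d x y.

Inductive linkage := Lmax | Lmin | Lavg.

Definition dmaxC (d : T -> T -> R) (A B : {set T}) : R :=
  \big[Num.max/0]_(x in A) \big[Num.max/0]_(y in B) d x y.

(* minimum over the (nonempty) pairs; the neutral element dmaxC d A B is
   an upper bound of all terms, so for nonempty A, B this is exactly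
   min_{x in A, y in B} d x y. *)
Definition dminC (d : T -> T -> R) (A B : {set T}) : R :=
  \big[Num.min/dmaxC d A B]_(x in A) \big[Num.min/dmaxC d A B]_(y in B) d x y.

Definition davgC (d : T -> T -> R) (A B : {set T}) : R :=
  (\sum_(x in A) \sum_(y in B) d x y) / (#|A| * #|B|)%:R.

Definition interdist (l : linkage) (d : T -> T -> R) : {set T} -> {set T} -> R :=
  match l with Lmax => dmaxC d | Lmin => dminC d | Lavg => davgC d end.

Record wgraph := WGraph {
  gvert : {set {set T}};
  gweight : {set T} -> {set T} -> R }.

Definition gadj (G : wgraph) (u v : {set T}) : bool :=
  [&& u \in gvert G, v \in gvert G & u != v].

Definition ClusterGraph (l : linkage) (d : T -> T -> R) (P : {set {set T}}) : wgraph :=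
  WGraph P (interdist l d).

Definition is_clique (G : wgraph) (S : {set {set T}}) : Prop :=
  S \subset gvert G /\ forall u v, u \in S -> v \in S -> u != v -> gadj G u v.

Definition im_cluster (PD : {set {set T}}) (Cu : {set T}) : {set {set T}} :=
  [set D in PD | D :&: Cu != set0].

Definition gdiam (G : wgraph) (S : {set {set T}}) : R :=
  \big[Num.max/0]_(Di in S) \big[Num.max/0]_(Dj in S | Di != Dj) gweight G Di Dj.

End Defs.

(* A cluster D in the image of C_u meets C_u, so any two clusters D, D' of the
   image are joined through points a in D :&: C_u and b in D' :&: C_u. For
   x in D and y in D' the triangle inequality along x, a, b, y gives
   d x y <= diam D + diam C_u + diam D' <= 3 delta, which bounds the maximum
   and the average linkage; the minimum linkage is already at most
   d a b <= diam C_u <= delta. *)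

From mathcomp Require Import all_boot all_order all_algebra.
Set Implicit Arguments. Unset Strict Implicit. Unset Printing Implicit Defensive.
Import Order.TTheory GRing.Theory Num.Theory.
Local Open Scope ring_scope.

Section ClusterDistances.
Variables (R : realFieldType) (T : finType) (d : T -> T -> R).

Lemma diam_ge0 (S : {set T}) : 0 <= diam d S.
Proof. exact: bigmax_ge_id. Qed.

Lemma le_diam (S : {set T}) x y : x \in S -> y \in S -> d x y <= diam d S.
Proof.
move=> xS yS; apply: le_trans (le_bigmax_cond _ _ xS).
exact: (le_bigmax_cond _ _ yS).
Qed.

Lemma dmaxC_le (A B : {set T}) (c : R) : 0 <= c ->
  (forall x y, x \in A -> y \in B -> d x y <= c) -> dmaxC d A B <= c.
Proof.
move=> c0 dc; apply: bigmax_le => // x xA.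
by apply: bigmax_le => // y yB; exact: dc.
Qed.

Lemma dminC_le (A B : {set T}) x y : x \in A -> y \in B -> dminC d A B <= d x y.
Proof.
move=> xA yB; apply: le_trans (bigmin_le_cond _ _ xA) _.
exact: bigmin_le_cond.
Qed.

Lemma davgC_le (A B : {set T}) (c : R) : A != set0 -> B != set0 ->
  (forall x y, x \in A -> y \in B -> d x y <= c) -> davgC d A B <= c.
Proof.
move=> /set0Pn[a aA] /set0Pn[b bB] dc.
have AB_gt0 : 0 < (#|A| * #|B|)%:R :> R.
  by rewrite ltr0n muln_gt0; apply/andP; split; apply/card_gt0P; [exists a|exists b].
rewrite /davgC ler_pdivrMr //.
apply: (@le_trans _ _ (\sum_(x in A) \sum_(y in B) c)).
  by apply: ler_sum => x xA; apply: ler_sum => y yB; exact: dc.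
by rewrite !sumr_const -mulrnA mulr_natr mulnC.
Qed.

Lemma dminC_le_diam (A B C : {set T}) :
  A :&: C != set0 -> B :&: C != set0 -> dminC d A B <= diam d C.
Proof.
move=> /set0Pn[a] /setIP[aA aC] /set0Pn[b] /setIP[bB bC].
exact: le_trans (dminC_le aA bB) (le_diam aC bC).
Qed.

Hypothesis d_triangle : forall x y z, d x z <= d x y + d y z.

Lemma le_diam_chain (A B C : {set T}) x y :
  x \in A -> y \in B -> A :&: C != set0 -> B :&: C != set0 ->
  d x y <= diam d A + diam d C + diam d B.
Proof.
move=> xA yB /set0Pn[a] /setIP[aA aC] /set0Pn[b] /setIP[bB bC].
apply: le_trans (d_triangle x a y) _; rewrite -addrA lerD ?le_diam //.
by apply: le_trans (d_triangle a b y) _; rewrite lerD ?le_diam.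
Qed.

End ClusterDistances.

Section ClusterGraphs.
Variables (R : realFieldType) (T : finType).

Lemma is_clique_sub (G : wgraph R T) (S : {set {set T}}) :
  S \subset gvert G -> is_clique G S.
Proof.
move=> /subsetP SG; split; first exact/subsetP.
by move=> u v uS vS uv; rewrite /gadj SG // SG.
Qed.

Lemma gdiam_le (G : wgraph R T) (S : {set {set T}}) (c : R) : 0 <= c ->
  (forall u v, u \in S -> v \in S -> u != v -> gweight G u v <= c) ->
  gdiam G S <= c.
Proof.
move=> c0 wc; apply: bigmax_le => // u uS.
by apply: bigmax_le => // v /andP[vS uv]; exact: wc.
Qed.

Lemma im_cluster_sub (PD : {set {set T}}) (C : {set T}) : im_cluster PD C \subset PD.
Proof. by apply/subsetP => D; rewrite inE => /andP[]. Qed.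

Lemma mem_im_cluster (PD : {set {set T}}) (C D : {set T}) :
  D \in im_cluster PD C -> D \in PD /\ D :&: C != set0.
Proof. by rewrite inE => /andP. Qed.

End ClusterGraphs.

Theorem proposition2 (R : realFieldType) (T : finType) (d : T -> T -> R)
  (hd : is_metric d) (PC PD : {set {set T}}) (delta : R)
  (hPC : partition PC [set: T]) (hPD : partition PD [set: T])
  (hdC : forall C, C \in PC -> diam d C <= delta)
  (hdD : forall D, D \in PD -> diam d D <= delta)
  (l : linkage) (Cu : {set T}) (hu : Cu \in PC) :
  is_clique (ClusterGraph l d PD) (im_cluster PD Cu) /\
  gdiam (ClusterGraph l d PD) (im_cluster PD Cu)
    <= (if l is Lmin then delta else 3 * delta).
Proof.
(* Only the triangle inequality and the fact that each cluster of the image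
   meets Cu are used. *)
case: hd => _ _ _ d_triangle.
split; first exact: is_clique_sub (im_cluster_sub _ _).
have delta0 : 0 <= delta := le_trans (diam_ge0 d Cu) (hdC _ hu).
have delta3 : 3 * delta = delta + delta + delta.
  by rewrite -[3]/(1 + 1 + 1)%:R !mulrDl !mul1r addrA.
apply: gdiam_le => [|A B /mem_im_cluster[AD AC] /mem_im_cluster[BD BC] _ /=].
  by case: l; rewrite ?mulr_ge0.
have A0 : A != set0 by apply: contraNneq AC => ->; rewrite set0I.
have B0 : B != set0 by apply: contraNneq BC => ->; rewrite set0I.
have dAB x y : x \in A -> y \in B -> d x y <= 3 * delta.
  move=> xA yB; apply: le_trans (le_diam_chain d_triangle xA yB AC BC) _.
  by rewrite delta3 (lerD (lerD (hdD _ AD) (hdC _ hu)) (hdD _ BD)).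
case: l => /=.
- by apply: dmaxC_le dAB; rewrite mulr_ge0.
- exact: le_trans (dminC_le_diam d AC BC) (hdC _ hu).
- exact: davgC_le A0 B0 dAB.
Qed.
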